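(* Let $X\subseteq\bar{X}$ and $Y\subseteq\bar{Y}$ be convex closures of Boolean metric spaces $X,Y$ over a Boolean ring $B$. Every contractive map $f:X\to Y$ extends to a unique contractive map $\bar{f}:\bar{X}\to\bar{Y}$. Furthermore: (1) $\bar{f}$ is an immersion if and only if $f$ is an immersion, and if $f$ is an isometry then so is $\bar f$; (2) for contractive maps $f:X\to Y$ and $g:Y\to Z$, where $Z\subseteq \bar Z$ is a convex closure, $\overline{g\circ f}=\bar{g}\circ\bar{f}$. In particular, any two convex closures of $X$ are isometric via an isometry restricting to the identity on $X$.
   Context: $B$ is a Boolean ring ($a\vee b=a+b+ab$, $a\le b\iff ab=a$; $a_1\oplus\cdots\oplus a_n$ denotes a sum of pairwise disjoint elements). A Boolean metric space over $B$: set $X$ with $d:X\times X\to B$, $d(x,y)=0\iff x=y$, symmetric, $d(x,z)\le d(x,y)\vee d(y,z)$. For $x_1,\dots,x_n\in X$, $a_i\in B$ with $a_1\oplus\cdots\oplus a_n=1$, $x$ is a convex combination of the $x_i$ with coefficients $a_i$ if $a_id(x,x_i)=0$ for all $i$; $X$ is convex if all such combinations exist. A convex closure of $X$ is a convex metric space $\bar X\supseteq X$ whose metric restricts to that of $X$ and in which every element is a convex combination of elements of $X$. A map $f$ is contractive if $d(f(x),f(y))\le d(x,y)$, an immersion if equality holds, and an isometry if it is a bijective immersion. *)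

From HB Require Import structures.
From mathcomp Require Import all_boot all_order all_algebra.
Set Implicit Arguments. Unset Strict Implicit. Unset Printing Implicit Defensive.
Import GRing.Theory.
Local Open Scope ring_scope.

Definition boolean_ring (B : comPzRingType) : Prop := forall a : B, a * a = a.

Definition bjoin (B : comPzRingType) (a b : B) : B := a + b + a * b.
Definition ble (B : comPzRingType) (a b : B) : Prop := a * b = a.

Definition bmetric (B : comPzRingType) (X : Type) (d : X -> X -> B) : Prop :=
  [/\ (forall x y, d x y = 0 <-> x = y),
      (forall x y, d x y = d y x) &
      (forall x y z, ble (d x z) (bjoin (d x y) (d y z)))].

Definition disjoint_partition (B : comPzRingType) (n : nat) (a : 'I_n -> B) : Prop :=
  (forall i j : 'I_n, i != j -> a i * a j = 0) /\ \sum_(i < n) a i = 1.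

Definition convex_comb (B : comPzRingType) (X : Type) (d : X -> X -> B)
  (n : nat) (xs : 'I_n -> X) (a : 'I_n -> B) (p : X) : Prop :=
  forall i : 'I_n, a i * d p (xs i) = 0.

Definition bconvex (B : comPzRingType) (X : Type) (d : X -> X -> B) : Prop :=
  forall (n : nat) (xs : 'I_n -> X) (a : 'I_n -> B),
    disjoint_partition a -> exists p : X, convex_comb d xs a p.

Definition convex_closure (B : comPzRingType) (X Xb : Type)
  (d : X -> X -> B) (db : Xb -> Xb -> B) (iX : X -> Xb) : Prop :=
  [/\ bmetric db, bconvex db,
      (forall x y : X, db (iX x) (iX y) = d x y) &
      (forall p : Xb, exists (n : nat) (xs : 'I_n -> X) (a : 'I_n -> B),
          disjoint_partition a /\ convex_comb db (fun i => iX (xs i)) a p)].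

Definition bcontractive (B : comPzRingType) (X Y : Type)
  (dX : X -> X -> B) (dY : Y -> Y -> B) (f : X -> Y) : Prop :=
  forall x y, ble (dY (f x) (f y)) (dX x y).

Definition bimmersion (B : comPzRingType) (X Y : Type)
  (dX : X -> X -> B) (dY : Y -> Y -> B) (f : X -> Y) : Prop :=
  forall x y, dY (f x) (f y) = dX x y.

Definition bisometry (B : comPzRingType) (X Y : Type)
  (dX : X -> X -> B) (dY : Y -> Y -> B) (f : X -> Y) : Prop :=
  bimmersion dX dY f /\ bijective f.

Definition contr_extension (B : comPzRingType) (X Y Xb Yb : Type)
  (dXb : Xb -> Xb -> B) (dYb : Yb -> Yb -> B) (iX : X -> Xb) (iY : Y -> Yb)
  (f : X -> Y) (fb : Xb -> Yb) : Prop :=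
  bcontractive dXb dYb fb /\ (forall x : X, fb (iX x) = iY (f x)).

(* The whole argument is "local reasoning along partitions of unity".  In a
   Boolean ring, an element c with c * d u x = 0 and c * d v y = 0 is a region
   where u = x and v = y, and there c * d u v = c * d x y (dist_localize).  If
   p, q are convex combinations of points z_i, w_j with coefficients a_i, b_j,
   then on every cell a_i * b_j the distance d p q equals d z_i w_j
   (comb_dist), and an identity or inequality holding on all cells of two
   partitions of unity holds globally (partition_ext2, partition_le2).

   Hence convex combinations are unique, and for contractive f : X -> Y the
   map sending sum a_i x_i to sum a_i f(x_i) is well defined and contractive
   (an immersion if f is one).  Conversely every contractive extension
   preserves convex combinations of points of X (ext_comb), which yields
   uniqueness; functoriality and the isometry statements follow, and the last
   clause is the extension of the identity of X between two closures. *)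

From HB Require Import structures.
From mathcomp Require Import all_boot all_order all_algebra.
From Stdlib Require Import ClassicalEpsilon FunctionalExtensionality.
Set Implicit Arguments. Unset Strict Implicit. Unset Printing Implicit Defensive.
Import GRing.Theory.
Local Open Scope ring_scope.

Section BooleanOrder.
Variable B : comPzRingType.

Lemma ble_trans (s t u : B) : ble s t -> ble t u -> ble s u.
Proof. by rewrite /ble => st tu; rewrite -st -mulrA tu. Qed.

Lemma ble_join_absorb_l (c e s t : B) :
  c * e = 0 -> ble s (bjoin e t) -> c * s * t = c * s.
Proof.
rewrite /ble /bjoin => ce hs.
have split_cs : c * s = c * s * e + c * s * t + c * s * e * t.
  by rewrite -{1}hs !mulrDr !mulrA.
have cse0 : c * s * e = 0 by rewrite mulrAC ce mul0r.
by rewrite {2}split_cs cse0 mul0r add0r addr0.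
Qed.

Lemma ble_join_absorb_r (c e s t : B) :
  c * e = 0 -> ble s (bjoin t e) -> c * s * t = c * s.
Proof.
move=> ce; rewrite /bjoin (addrC t) (mulrC t); exact: ble_join_absorb_l.
Qed.

Lemma partition_ext n (a : 'I_n -> B) (u v : B) :
  \sum_(i < n) a i = 1 -> (forall i, a i * u = a i * v) -> u = v.
Proof.
move=> sum_a agree.
rewrite -[u]mul1r -[v]mul1r -sum_a !big_distrl; apply: eq_bigr => i _; exact: agree.
Qed.

Lemma partition_ext2 n m (a : 'I_n -> B) (b : 'I_m -> B) (u v : B) :
  \sum_(i < n) a i = 1 -> \sum_(j < m) b j = 1 ->
  (forall i j, a i * b j * u = a i * b j * v) -> u = v.
Proof.
move=> sum_a sum_b agree; apply: (partition_ext sum_a) => i.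
apply: (partition_ext sum_b) => j; rewrite !mulrA ![b j * _]mulrC; exact: agree.
Qed.

Variable hB : boolean_ring B.

Lemma ble_mul (c s t : B) : ble s t -> ble (c * s) (c * t).
Proof. by rewrite /ble => st; rewrite -mulrA (mulrCA s) st mulrA hB. Qed.

Lemma partition_le2 n m (a : 'I_n -> B) (b : 'I_m -> B) (u v : B) :
  \sum_(i < n) a i = 1 -> \sum_(j < m) b j = 1 ->
  (forall i j, ble (a i * b j * u) (a i * b j * v)) -> ble u v.
Proof.
move=> sum_a sum_b cell_le; apply: (partition_ext2 sum_a sum_b) => i j.
move: (cell_le i j); rewrite /ble => <-; move: (a i * b j) => c.
by rewrite -mulrA (mulrCA u c) !mulrA hB.
Qed.

End BooleanOrder.

Section BooleanMetric.
Variables (B : comPzRingType) (M : Type) (d : M -> M -> B).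
Hypothesis hd : bmetric d.

Lemma dist_self x : d x x = 0.
Proof. by case: hd => zero _ _; apply/zero. Qed.

Lemma dist_sym x y : d x y = d y x.
Proof. by case: hd. Qed.

Lemma dist_localize_le (c : B) u v x y :
  c * d u x = 0 -> c * d v y = 0 -> c * d u v * d x y = c * d u v.
Proof.
case: hd => _ _ tri ux vy.
have uv_xv : c * d u v * d x v = c * d u v by exact: ble_join_absorb_l ux (tri u x v).
have yv : c * d y v = 0 by rewrite dist_sym.
have xv_xy : c * d x v * d x y = c * d x v by exact: ble_join_absorb_r yv (tri x y v).
rewrite -uv_xv [c * d u v]mulrC -!mulrA; congr (_ * _).
by rewrite !mulrA xv_xy.
Qed.

Lemma dist_localize (c : B) u v x y :
  c * d u x = 0 -> c * d v y = 0 -> c * d u v = c * d x y.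
Proof.
move=> ux vy.
have xu : c * d x u = 0 by rewrite dist_sym.
have yv : c * d y v = 0 by rewrite dist_sym.
by rewrite -(dist_localize_le ux vy) -(dist_localize_le xu yv) mulrAC.
Qed.

Lemma comb_dist n m (zs : 'I_n -> M) (ws : 'I_m -> M) a b p q i j :
  convex_comb d zs a p -> convex_comb d ws b q ->
  a i * b j * d p q = a i * b j * d (zs i) (ws j).
Proof.
move=> comb_p comb_q; apply: dist_localize.
  by rewrite mulrAC comb_p mul0r.
by rewrite -mulrA comb_q mulr0.
Qed.

Lemma comb_unique n (zs : 'I_n -> M) a p q : \sum_(i < n) a i = 1 ->
  convex_comb d zs a p -> convex_comb d zs a q -> p = q.
Proof.
move=> sum_a comb_p comb_q; case: hd => zero _ _; apply/zero.
apply: (partition_ext sum_a) => i.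
by rewrite (dist_localize (comb_p i) (comb_q i)) dist_self !mulr0.
Qed.

Lemma comb_point x : convex_comb d (fun _ : 'I_1 => x) (fun _ => 1) x.
Proof. by move=> i; rewrite dist_self mulr0. Qed.

End BooleanMetric.

Section Extension.
Variables (B : comPzRingType) (X Xb Y Yb : Type).
Variables (dX : X -> X -> B) (dXb : Xb -> Xb -> B).
Variables (dY : Y -> Y -> B) (dYb : Yb -> Yb -> B).
Variables (iX : X -> Xb) (iY : Y -> Yb) (f : X -> Y).

Lemma ext_comb fb n (xs : 'I_n -> X) a p :
  contr_extension dXb dYb iX iY f fb -> convex_comb dXb (fun i => iX (xs i)) a p ->
  convex_comb dYb (fun i => iY (f (xs i))) a (fb p).
Proof.
move=> [fb_contr fb_ext] comb_p i; rewrite -fb_ext.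
by rewrite -(fb_contr p (iX (xs i))) mulrCA comb_p mulr0.
Qed.

Hypothesis hXb : convex_closure dX dXb iX.

Lemma ext_unique (hmYb : bmetric dYb) fb1 fb2 :
  contr_extension dXb dYb iX iY f fb1 -> contr_extension dXb dYb iX iY f fb2 ->
  forall p, fb1 p = fb2 p.
Proof.
move=> ext1 ext2 p; case: hXb => _ _ _ spanX.
have [n [xs [a [[_ sum_a] comb_p]]]] := spanX p.
exact: (comb_unique hmYb sum_a (ext_comb ext1 comb_p) (ext_comb ext2 comb_p)).
Qed.

Lemma ext_immersion_restrict (hYb : convex_closure dY dYb iY) fb :
  contr_extension dXb dYb iX iY f fb -> bimmersion dXb dYb fb -> bimmersion dX dY f.
Proof.
case: hXb hYb => _ _ distX _ [_ _ distY _] [_ fb_ext] fb_imm x y.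
by rewrite -distY -!fb_ext fb_imm distX.
Qed.

(* p' in Yb is the image of p in Xb under the candidate extension: both are
   convex combinations, with the same coefficients, of x_i and f(x_i). *)
Definition matched (p : Xb) (p' : Yb) : Prop :=
  exists n (xs : 'I_n -> X) (a : 'I_n -> B), \sum_(i < n) a i = 1 /\
    convex_comb dXb (fun i => iX (xs i)) a p /\
    convex_comb dYb (fun i => iY (f (xs i))) a p'.

Hypothesis hYb : convex_closure dY dYb iY.

Lemma matched_contractive (hB : boolean_ring B) p q p' q' :
  bcontractive dX dY f -> matched p p' -> matched q q' -> ble (dYb p' q') (dXb p q).
Proof.
case: hXb hYb => mX _ distX _ [mY _ distY _] f_contr.
move=> [n [xs [a [sum_a [comb_p comb_p']]]]] [m [ys [b [sum_b [comb_q comb_q']]]]].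
apply: (partition_le2 hB sum_a sum_b) => i j.
rewrite (comb_dist mX _ _ comb_p comb_q) (comb_dist mY _ _ comb_p' comb_q').
by rewrite distX distY; apply: ble_mul.
Qed.

Lemma matched_immersion p q p' q' :
  bimmersion dX dY f -> matched p p' -> matched q q' -> dYb p' q' = dXb p q.
Proof.
case: hXb hYb => mX _ distX _ [mY _ distY _] f_imm.
move=> [n [xs [a [sum_a [comb_p comb_p']]]]] [m [ys [b [sum_b [comb_q comb_q']]]]].
apply: (partition_ext2 sum_a sum_b) => i j.
rewrite (comb_dist mX _ _ comb_p comb_q) (comb_dist mY _ _ comb_p' comb_q').
by rewrite distX distY f_imm.
Qed.

Lemma matched_point x : matched (iX x) (iY (f x)).
Proof.
case: hXb hYb => mX _ _ _ [mY _ _ _].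
exists 1%N, (fun _ => x), (fun _ => 1); split; first by rewrite big_ord1.
by split; apply: comb_point.
Qed.

Lemma ext_matched fb : contr_extension dXb dYb iX iY f fb -> forall p, matched p (fb p).
Proof.
move=> ext_fb p; case: hXb => _ _ _ spanX.
have [n [xs [a [[_ sum_a] comb_p]]]] := spanX p.
by exists n, xs, a; split; [|split; [|exact: ext_comb ext_fb comb_p]].
Qed.

(* Existence: choose for each p a matched image, using convexity of Yb. *)
Lemma ext_exists (hB : boolean_ring B) :
  bcontractive dX dY f -> exists fb, contr_extension dXb dYb iX iY f fb.
Proof.
move=> f_contr; case: hXb hYb => mX _ _ spanX [mY convY _ _].
have matched_total : forall p, exists p', matched p p'.
  move=> p; have [n [xs [a [part_a comb_p]]]] := spanX p.
  have [p' comb_p'] := convY n (fun i => iY (f (xs i))) a part_a.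
  by exists p', n, xs, a; split; [exact: part_a.2|].
have [fb fb_matched] := choice _ matched_total.
have fb_contr : bcontractive dXb dYb fb.
  by move=> p q; apply: matched_contractive.
exists fb; split=> // x.
have := matched_contractive hB f_contr (fb_matched (iX x)) (matched_point x).
rewrite /ble dist_self // mulr0 => fb_x; case: mY => zero _ _; exact/zero.
Qed.

Lemma ext_immersion fb :
  contr_extension dXb dYb iX iY f fb -> bimmersion dX dY f -> bimmersion dXb dYb fb.
Proof.
move=> ext_fb f_imm p q.
exact: (matched_immersion f_imm (ext_matched ext_fb p) (ext_matched ext_fb q)).
Qed.

(* The extension of an isometry is an isometry: it is an injective immersion,
   and it is onto since sum b_j y_j is the image of sum b_j f^-1(y_j). *)
Lemma ext_isometry fb :
  contr_extension dXb dYb iX iY f fb -> bisometry dX dY f -> bisometry dXb dYb fb.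
Proof.
move=> ext_fb [f_imm [g gK Kg]].
have fb_imm := ext_immersion ext_fb f_imm.
case: hXb hYb => mX convX _ _ [mY _ _ spanY].
have fb_inj : injective fb.
  move=> p q eq_fb; case: mX => zero _ _; apply/zero.
  by rewrite -fb_imm eq_fb dist_self.
have fb_onto : forall q, exists p, fb p = q.
  move=> q; have [m [ys [b [part_b comb_q]]]] := spanY q.
  have [p comb_p] := convX m (fun j => iX (g (ys j))) b part_b.
  exists p; apply: (comb_unique mY part_b.2 _ comb_q) => j.
  by have := ext_comb ext_fb comb_p j; rewrite /= Kg.
have [h fbK] := choice _ fb_onto.
by split=> //; exists h => // p; apply: fb_inj; rewrite fbK.
Qed.

End Extension.

Lemma ext_comp (B : comPzRingType) (X Xb Y Yb Z Zb : Type)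
  (dX : X -> X -> B) (dXb : Xb -> Xb -> B) (dYb : Yb -> Yb -> B)
  (dZb : Zb -> Zb -> B) (iX : X -> Xb) (iY : Y -> Yb) (iZ : Z -> Zb)
  (f : X -> Y) (g : Y -> Z) (fb : Xb -> Yb) (gb : Yb -> Zb) (hb : Xb -> Zb) :
  convex_closure dX dXb iX -> bmetric dZb ->
  contr_extension dXb dYb iX iY f fb -> contr_extension dYb dZb iY iZ g gb ->
  contr_extension dXb dZb iX iZ (fun x => g (f x)) hb ->
  forall p, hb p = gb (fb p).
Proof.
move=> hXb mZ [fb_contr fb_ext] [gb_contr gb_ext] ext_hb.
apply: (ext_unique hXb mZ ext_hb); split.
  by move=> p q; apply: ble_trans (gb_contr _ _) (fb_contr _ _).
by move=> x; rewrite fb_ext gb_ext.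
Qed.

Theorem mainTheorem15 (B : comPzRingType) (hB : boolean_ring B)
  (X Xb Y Yb : Type) (dX : X -> X -> B) (dXb : Xb -> Xb -> B)
  (dY : Y -> Y -> B) (dYb : Yb -> Yb -> B) (iX : X -> Xb) (iY : Y -> Yb)
  (hX : bmetric dX) (hY : bmetric dY)
  (hXb : convex_closure dX dXb iX) (hYb : convex_closure dY dYb iY) :
  (* existence and uniqueness of the bcontractive extension *)
  (forall f : X -> Y, bcontractive dX dY f ->
     exists! fb : Xb -> Yb, contr_extension dXb dYb iX iY f fb)
  /\
  (* (1) immersions and isometries *)
  (forall (f : X -> Y) (fb : Xb -> Yb), bcontractive dX dY f ->
     contr_extension dXb dYb iX iY f fb ->
     (bimmersion dXb dYb fb <-> bimmersion dX dY f) /\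
     (bisometry dX dY f -> bisometry dXb dYb fb))
  /\
  (* (2) functoriality: the extension of g \o f is gb \o fb *)
  (forall (Z Zb : Type) (dZ : Z -> Z -> B) (dZb : Zb -> Zb -> B) (iZ : Z -> Zb),
     bmetric dZ -> convex_closure dZ dZb iZ ->
     forall (f : X -> Y) (g : Y -> Z) (fb : Xb -> Yb) (gb : Yb -> Zb)
            (hb : Xb -> Zb),
     bcontractive dX dY f -> bcontractive dY dZ g ->
     contr_extension dXb dYb iX iY f fb ->
     contr_extension dYb dZb iY iZ g gb ->
     contr_extension dXb dZb iX iZ (fun x => g (f x)) hb ->
     forall p : Xb, hb p = gb (fb p))
  /\
  (* any two convex closures of X are isometric over X *)
  (forall (Xb' : Type) (dXb' : Xb' -> Xb' -> B) (iX' : X -> Xb'),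
     convex_closure dX dXb' iX' ->
     exists h : Xb -> Xb', bisometry dXb dXb' h /\ (forall x : X, h (iX x) = iX' x)).
Proof.
have mYb : bmetric dYb by case: hYb.
split.
  move=> f f_contr; have [fb ext_fb] := ext_exists hXb hYb hB f_contr.
  exists fb; split=> // gb ext_gb.
  exact: functional_extensionality (ext_unique hXb mYb ext_fb ext_gb).
split.
  move=> f fb _ ext_fb; split; last exact: (ext_isometry hXb hYb ext_fb).
  split; first exact: (ext_immersion_restrict hXb hYb ext_fb).
  exact: (ext_immersion hXb hYb ext_fb).
split.
  move=> Z Zb dZ dZb iZ _ [mZb _ _ _] f g fb gb hb _ _.
  exact: (ext_comp hXb mZb).
move=> Xb' dXb' iX' hXb'.
have id_iso : bisometry dX dX id by split=> //; exists id.
have id_contr : bcontractive dX dX id by move=> x y; rewrite /ble hB.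
have [h ext_h] := ext_exists hXb hXb' hB id_contr.
by exists h; split; [exact: (ext_isometry hXb hXb' ext_h id_iso) | case: ext_h].
Qed.
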